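(* Let $A,B\subseteq\Gamma$ be finite nonempty sets. Then there are $s\ge2^{-4}|A||B|^2\mathsf{E}(A,B)^{-1}$ pairwise disjoint sets $A_j\subseteq A+b_j$ with $|A_j|\ge|A|/2$ and $b_j\in B$, $j\in[s]$. Moreover, for any set $S\subseteq A+B$ put $\sigma=\sum_{x\in S}(A*B)(x)$ and suppose $\sigma\ge16|B|$. Then there are $s\ge2^{-8}\sigma^3|A|^{-2}|B|^{-1}\mathsf{E}(A,B)^{-1}$ pairwise disjoint sets $S_j\subseteq S\cap(A+b_j)$ with $|S_j|\ge2^{-3}\sigma|B|^{-1}$ and $b_j\in B$, $j\in[s]$.
   Context: $\Gamma$ is an abelian group. $(A*B)(x)=|\{(a,b)\in A\times B:a+b=x\}|$. $\mathsf{E}(A,B)=|\{(a_1,a_2,b_1,b_2)\in A^2\times B^2:a_1+b_1=a_2+b_2\}|$. *)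

From HB Require Import structures.
From mathcomp Require Import all_boot all_order all_algebra.
From mathcomp Require Import finmap.
Set Implicit Arguments. Unset Strict Implicit. Unset Printing Implicit Defensive.
Import Order.TTheory GRing.Theory Num.Theory.
Local Open Scope fset_scope.

Definition rconv (G : zmodType) (A B : {fset G}) (x : G) : nat :=
  #|` [fset p in A `*` B | (p.1 + p.2 == x)%R]|.

Definition energy (G : zmodType) (A B : {fset G}) : nat :=
  #|` [fset q in (A `*` A) `*` (B `*` B) |
        (q.1.1 + q.2.1 == q.1.2 + q.2.2)%R]|.

Definition sumset (G : zmodType) (A B : {fset G}) : {fset G} :=
  [fset (p.1 + p.2)%R | p in A `*` B].

Definition translate (G : zmodType) (A : {fset G}) (b : G) : {fset G} :=
  [fset (a + b)%R | a in A].

From HB Require Import structures.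
From mathcomp Require Import all_boot all_order all_algebra.
From mathcomp Require Import finmap.
From mathcomp Require Import zify ring.

(* Choose greedily: as long as some translate A + b (resp. trace S :&: (A + b))
   has a large part outside the union U of the sets chosen so far, add that
   part.  When this stops, U contains most of every translate (trace), so U
   carries a large share of the mass of A * B: at least |A||B|/2 (resp. 7/8 of
   sigma).  But U is the union of s sets of size at most |A|, and by
   Cauchy-Schwarz (sum_(x in U) (A * B)(x))^2 <= |U| E(A,B) <= s |A| E(A,B).
   Comparing the two bounds gives the lower bound on s. *)
Set Implicit Arguments.
Unset Strict Implicit.
Unset Printing Implicit Defensive.

Import Order.TTheory GRing.Theory Num.Theory.
Local Open Scope fset_scope.

Definition pack_cover (T I : choiceType) (L : seq ({fset T} * I)) : {fset T} :=
  \bigcup_(p <- L) p.1.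

Lemma pack_cover_nil (T I : choiceType) : pack_cover (Nil ({fset T} * I)) = fset0.
Proof. exact: big_nil. Qed.

Lemma pack_cover_cons (T I : choiceType) (p : {fset T} * I) L :
  pack_cover (p :: L) = p.1 `|` pack_cover L.
Proof. exact: big_cons. Qed.

Section GreedyPacking.
Variables (T I : choiceType) (B : {fset I}) (F : I -> {fset T}).
Variable large : pred {fset T}.
Hypothesis large_fset0 : ~~ large fset0.

Definition packing (L : seq ({fset T} * I)) : bool :=
  all (fun p => [&& p.2 \in B, p.1 `<=` F p.2 & large p.1]) L &&
  pairwise (fun p q => [disjoint p.1 & q.1]%fset) L.

Definition saturated (L : seq ({fset T} * I)) : bool :=
  all (fun b => ~~ large (F b `\` pack_cover L)) B.

Lemma fdisjoint_pack_cover (X : {fset T}) (L : seq ({fset T} * I)) :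
  [disjoint X & pack_cover L] = all (fun p => [disjoint X & p.1]%fset) L.
Proof.
elim: L => [|p L IH]; first by rewrite pack_cover_nil fdisjointX0.
by rewrite pack_cover_cons fdisjointXU IH.
Qed.

Lemma packing_cons X b L : packing ((X, b) :: L) =
  [&& b \in B, X `<=` F b, large X, [disjoint X & pack_cover L]%fset & packing L].
Proof. by rewrite /packing /= fdisjoint_pack_cover -!andbA; do !bool_congr. Qed.

Lemma pack_cover_sub L : packing L -> pack_cover L `<=` \bigcup_(b <- B) F b.
Proof.
case/andP=> /allP packL _; apply/bigfcupsP => p /packL /and3P[pB pF _] _.
by apply: fsubset_trans pF _; apply: bigfcup_sup.
Qed.

Lemma packing_extend L : packing L -> ~~ saturated L ->
  exists2 L', packing L' & (#|` pack_cover L| < #|` pack_cover L'|)%N.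
Proof.
move=> packL /allPn[b bB /negPn largeD].
set X := F b `\` pack_cover L.
have disjX : [disjoint X & pack_cover L] by apply/fdisjointP => x; rewrite inE => /andP[].
exists ((X, b) :: L); first by rewrite packing_cons bB fsubsetDl largeD disjX.
have [_] := leq_card_fsetU X (pack_cover L); rewrite pack_cover_cons disjX => /eqP ->.
rewrite -[ltnLHS]add0n ltn_add2r lt0n cardfs_eq0.
by apply: contraNneq large_fset0 => <-.
Qed.

Lemma saturated_packing_exists : exists2 L, packing L & saturated L.
Proof.
set W := \bigcup_(b <- B) F b.
suff: forall L, packing L -> exists2 L', packing L' & saturated L'.
  by move/(_ [::]); apply.
move=> L; have [n] := ubnP (#|` W| - #|` pack_cover L|).
elim: n L => // n IH L measureL packL.
have [satL|unsatL] := boolP (saturated L); first by exists L.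
have [L' packL' ltL] := packing_extend packL unsatL.
apply: (IH L') => //; move: (fsubset_leq_card (pack_cover_sub packL')).
rewrite -/W; lia.
Qed.

Lemma packing_nth d L : packing L ->
  [/\ forall j : 'I_(size L), (nth d L j).2 \in B,
      forall j : 'I_(size L), (nth d L j).1 `<=` F (nth d L j).2,
      forall j : 'I_(size L), large (nth d L j).1 &
      forall i j : 'I_(size L), i != j -> [disjoint (nth d L i).1 & (nth d L j).1]%fset].
Proof.
case/andP=> /(all_nthP d) packL /(pairwiseP d) disjL.
have packLj (j : 'I_(size L)) := packL j (ltn_ord j).
have disjLij (i j : 'I_(size L)) : i < j -> [disjoint (nth d L i).1 & (nth d L j).1]%fset.
  by apply: disjL; rewrite inE.
split=> [j|j|j|i j]; try by case/and3P: (packLj j).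
by rewrite neq_ltn => /orP[/disjLij | /disjLij]; rewrite // fdisjoint_sym.
Qed.

Lemma card_pack_cover L M : packing L -> (forall b, b \in B -> #|` F b| <= M)%N ->
  (#|` pack_cover L| <= size L * M)%N.
Proof.
move=> /andP[packL _] FM; elim: L packL => [|[X b] L IH] /=.
  by rewrite pack_cover_nil cardfs0.
case/andP=> /and3P[bB XF _] /IH coverL; rewrite pack_cover_cons mulSn.
apply: leq_trans (leq_card_fsetU X _).1 _; rewrite leq_add //.
exact: leq_trans (fsubset_leq_card XF) (FM b bB).
Qed.
End GreedyPacking.

Lemma sum_nat_const_seq (T : Type) (s : seq T) (k : nat) :
  (\sum_(x <- s) k = size s * k)%N.
Proof. by rewrite big_const_seq count_predT iter_addn_0 mulnC. Qed.

Lemma leq_sum_seq (T : eqType) (s : seq T) (F1 F2 : T -> nat) :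
  (forall x, x \in s -> F1 x <= F2 x)%N ->
  (\sum_(x <- s) F1 x <= \sum_(x <- s) F2 x)%N.
Proof. by move=> le_F; rewrite big_seq [leqRHS]big_seq; apply: leq_sum. Qed.

Lemma leq_sqr_sum (T : Type) (s : seq T) (c : T -> nat) :
  ((\sum_(x <- s) c x) ^ 2 <= size s * \sum_(x <- s) c x ^ 2)%N.
Proof.
rewrite -(leq_pmul2l (isT : 0 < 2)%N).
have -> : (2 * (\sum_(x <- s) c x) ^ 2 = \sum_(x <- s) \sum_(y <- s) 2 * (c x * c y))%N.
  by rewrite expnS expn1 big_distrlr big_distrr; under eq_bigr do rewrite big_distrr.
have -> : (2 * (size s * \sum_(x <- s) c x ^ 2) =
          \sum_(x <- s) \sum_(y <- s) (c x ^ 2 + c y ^ 2))%N.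
  under [RHS]eq_bigr do rewrite big_split sum_nat_const_seq /=.
  by rewrite big_split /= -big_distrr sum_nat_const_seq mul2n -addnn.
by apply: leq_sum => x _; apply: leq_sum => y _; apply: nat_Cauchy.
Qed.

Lemma card_fset_sep (T : choiceType) (X : {fset T}) (P : pred T) :
  #|` [fset x in X | P x]| = (\sum_(x <- X) P x)%N.
Proof.
rewrite card_fset_sum1 big_fset /= big_mkcond /=.
by apply: eq_bigr => x _; case: (P x).
Qed.

Lemma sum_nat_eq_mem (T : eqType) (s : seq T) (y : T) : uniq s ->
  (\sum_(x <- s) (y == x) = (y \in s))%N.
Proof.
elim: s => [|x s IH]; rewrite ?big_nil ?big_cons // => /andP[xs us].
rewrite IH // in_cons; case: eqVneq => [->|]; last by rewrite add0n.
by rewrite (negbTE xs).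
Qed.

Lemma sum_fsetX (T1 T2 : choiceType) (X : {fset T1}) (Y : {fset T2})
    (F : T1 * T2 -> nat) :
  (\sum_(p <- X `*` Y) F p = \sum_(x <- X) \sum_(y <- Y) F (x, y))%N.
Proof. by rewrite big_imfset2 /=; last by move=> [a b] [c d] _ _ [-> ->]. Qed.

Lemma card_fsetI_sum (T : choiceType) (X U : {fset T}) :
  #|` X `&` U| = (\sum_(x <- X) (x \in U))%N.
Proof. by rewrite -card_fset_sep; congr #|` _|; apply/fsetP => x; rewrite !inE. Qed.

Section Translates.
Variables (G : zmodType) (A : {fset G}).

Lemma card_translate b : #|` translate A b| = #|` A|.
Proof. by rewrite /translate card_imfset //; apply: addIr. Qed.

Lemma card_translateI b (U : {fset G}) :
  #|` translate A b `&` U| = (\sum_(a <- A) ((a + b)%R \in U))%N.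
Proof. by rewrite card_fsetI_sum /translate big_imfset //= => x y _ _; apply: addIr. Qed.
End Translates.

Section ConvolutionMass.
Variables (G : zmodType) (A B : {fset G}).

Definition conv_mass (U : {fset G}) : nat := \sum_(x <- U) rconv A B x.

Lemma rconv_sum x : rconv A B x = (\sum_(p <- A `*` B) ((p.1 + p.2)%R == x))%N.
Proof. by rewrite /rconv card_fset_sep. Qed.

Lemma conv_mass_pairs (U : {fset G}) :
  conv_mass U = (\sum_(p <- A `*` B) ((p.1 + p.2)%R \in U))%N.
Proof.
rewrite /conv_mass; under eq_bigr do rewrite rconv_sum.
rewrite exchange_big; apply: eq_bigr => p _.
exact: sum_nat_eq_mem (fset_uniq U).
Qed.

Lemma conv_mass_translates (U : {fset G}) :
  conv_mass U = (\sum_(b <- B) #|` translate A b `&` U|)%N.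
Proof.
under eq_bigr do rewrite card_translateI.
by rewrite exchange_big conv_mass_pairs sum_fsetX.
Qed.

Lemma conv_mass_leq (U : {fset G}) : (conv_mass U <= #|` A| * #|` B|)%N.
Proof.
rewrite conv_mass_translates mulnC -sum_nat_const_seq; apply: leq_sum => b _.
by rewrite -(card_translate A b) fsubset_leq_card ?fsubsetIl.
Qed.

Lemma energy_pairs : energy A B =
  (\sum_(p <- A `*` B) \sum_(q <- A `*` B) ((p.1 + p.2)%R == (q.1 + q.2)%R))%N.
Proof.
rewrite /energy card_fset_sep !sum_fsetX; apply: eq_bigr => a1 _.
under eq_bigr do rewrite sum_fsetX.
under [RHS]eq_bigr do rewrite sum_fsetX.
by rewrite [RHS]exchange_big.
Qed.

Lemma sum_rconv_sqr_leq (U : {fset G}) :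
  (\sum_(x <- U) rconv A B x ^ 2 <= energy A B)%N.
Proof.
rewrite energy_pairs.
have -> : (\sum_(x <- U) rconv A B x ^ 2 = \sum_(x <- U) \sum_(p <- A `*` B)
      \sum_(q <- A `*` B) (((p.1 + p.2)%R == x) * ((q.1 + q.2)%R == x)))%N.
  by apply: eq_bigr => x _; rewrite rconv_sum expnS expn1 big_distrlr.
rewrite exchange_big /=; apply: leq_sum => p _.
rewrite exchange_big /=; apply: leq_sum => q _.
have [->|neq] := eqVneq (p.1 + p.2)%R (q.1 + q.2)%R.
  under eq_bigr do rewrite mulnb andbb.
  by rewrite sum_nat_eq_mem ?fset_uniq //; apply: leq_b1.
rewrite leqn0 sum_nat_seq_eq0; apply/allP => x _.
by apply: contraNT neq; rewrite muln_eq0 negb_or !eqb0 !negbK => /andP[/eqP-> /eqP->].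
Qed.

Lemma conv_mass_sqr_leq (U : {fset G}) : (conv_mass U ^ 2 <= #|` U| * energy A B)%N.
Proof.
apply: leq_trans (leq_sqr_sum _ _) _.
by rewrite leq_mul2l sum_rconv_sqr_leq orbT.
Qed.

Lemma mass_of_cover_of_translates (U : {fset G}) :
  (forall b, b \in B -> #|` translate A b `\` U| * 2 < #|` A|)%N ->
  (#|` A| * #|` B| <= 2 * conv_mass U)%N.
Proof.
move=> small_leftover.
rewrite conv_mass_translates mulnC -sum_nat_const_seq big_distrr /=.
apply: leq_sum_seq => b /small_leftover.
have := cardfsID U (translate A b); rewrite card_translate.
set x := #|` _ `&` U|; set y := #|` _ `\` U|; set a := #|` A|; lia.
Qed.

Lemma mass_of_cover_of_traces (S U : {fset G}) : U `<=` S ->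
  (forall b, b \in B ->
     #|` (S `&` translate A b) `\` U| * (8 * #|` B|) < conv_mass S)%N ->
  (7 * conv_mass S <= 8 * conv_mass U)%N.
Proof.
move=> subUS small_leftover; have [B0|B_gt0] := posnP #|` B|.
  by have := conv_mass_leq S; rewrite B0 muln0 leqn0 => /eqP->.
have per_b b : b \in B -> (8 * #|` B| * #|` translate A b `&` S| <=
                         8 * #|` B| * #|` translate A b `&` U| + conv_mass S)%N.
  move=> /small_leftover; have := cardfsID U (S `&` translate A b).
  rewrite fsetIAC (fsetIidPr subUS) (fsetIC U) (fsetIC S).
  set x := #|` _ `&` U|; set y := #|` _ `\` U|; set z := #|` _ `&` S|; nia.
have := leq_sum_seq per_b.
rewrite big_split /= -!big_distrr /= -!conv_mass_translates sum_nat_const_seq.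
rewrite -(leq_pmul2l B_gt0).
by set N := conv_mass U; set M := conv_mass S; set b := #|` B|; nia.
Qed.
End ConvolutionMass.

(* No hypothesis [0 < y] is needed since [x / 0 = 0]. *)
Lemma ler_nat_div (R : numFieldType) (x y s : nat) :
  (x <= s * y)%N -> (x%:R / y%:R <= s%:R :> R)%R.
Proof.
move=> le_x; have [->|y_neq0] := eqVneq y 0%N; first by rewrite invr0 mulr0.
by rewrite ler_pdivrMr ?ltr0n ?lt0n // -natrM ler_nat.
Qed.

Lemma mulVr_div_nat (R : fieldType) (k y : nat) (x : R) :
  (k%:R^-1 * x / y%:R = x / (k * y)%:R)%R.
Proof. by rewrite natrM invfM mulrCA mulrA. Qed.

Section DisjointTranslates.
Variables (G : zmodType) (A B : {fset G}).
Local Open Scope ring_scope.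

Lemma many_disjoint_halves_of_translates : A != fset0 ->
  exists (s : nat) (Aj : 'I_s -> {fset G}) (b : 'I_s -> G),
    [/\ (s%:R : rat) >= 2^-4 * (#|` A|%:R * #|` B|%:R ^+ 2) / (energy A B)%:R,
        (forall j, b j \in B),
        (forall j, Aj j `<=` translate A (b j)),
        (forall j, (#|` Aj j|%:R : rat) >= #|` A|%:R / 2) &
        (forall i j, i != j -> [disjoint Aj i & Aj j])].
Proof.
move=> A_neq0; pose large (X : {fset G}) := (#|` A| <= #|` X| * 2)%N.
have large0 : ~~ large fset0 by rewrite /large cardfs0 -ltnNge cardfs_gt0.
have [L packL satL] := saturated_packing_exists B (translate A) large0.
set U := pack_cover L.
have cardU : (#|` U| <= size L * #|` A|)%N.
  by apply: card_pack_cover packL _ => b _; rewrite card_translate.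
have massU : (#|` A| * #|` B| <= 2 * conv_mass A B U)%N.
  by apply: mass_of_cover_of_translates => b /(allP satL); rewrite -/U /large -ltnNge.
have key : (#|` A| * #|` B| ^ 2 <= size L * (2 ^ 4 * energy A B))%N.
  have A_gt0 : (0 < #|` A|)%N by rewrite cardfs_gt0.
  rewrite -(leq_pmul2l A_gt0).
  have := conv_mass_sqr_leq A B U; have := leq_mul massU massU.
  set N := conv_mass A B U; set a := #|` A|; set E := energy A B; nia.
pose d : {fset G} * G := (fset0, 0).
have [inB subF largeL disjL] := packing_nth d packL.
exists (size L), (fun j => (nth d L j).1), (fun j => (nth d L j).2).
split; [|exact: inB|exact: subF| |exact: disjL].
- by rewrite -!natrX -natrM mulVr_div_nat; apply: ler_nat_div.
- by move=> j; apply: ler_nat_div; apply: largeL.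
Qed.

Lemma many_disjoint_large_traces (S : {fset G}) :
  (0 < conv_mass A B S)%N ->
  exists (s : nat) (Sj : 'I_s -> {fset G}) (b : 'I_s -> G),
    [/\ (s%:R : rat) >= 2^-8 * (conv_mass A B S)%:R ^+ 3 /
                         (#|` A|%:R ^+ 2 * #|` B|%:R * (energy A B)%:R),
        (forall j, b j \in B),
        (forall j, Sj j `<=` S `&` translate A (b j)),
        (forall j, (#|` Sj j|%:R : rat) >= 2^-3 * (conv_mass A B S)%:R / #|` B|%:R) &
        (forall i j, i != j -> [disjoint Sj i & Sj j])].
Proof.
set sigma := conv_mass A B S => sigma_gt0.
pose large (X : {fset G}) := (sigma <= #|` X| * (8 * #|` B|))%N.
have large0 : ~~ large fset0 by rewrite /large cardfs0 -ltnNge.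
have [L packL satL] :=
  saturated_packing_exists B (fun b => S `&` translate A b) large0.
set U := pack_cover L.
have cardU : (#|` U| <= size L * #|` A|)%N.
  apply: card_pack_cover packL _ => b _.
  by rewrite -(card_translate A b) fsubset_leq_card ?fsubsetIr.
have subUS : U `<=` S.
  apply: fsubset_trans (pack_cover_sub packL) _.
  by apply/bigfcupsP => b _ _; apply: fsubsetIl.
have massU : (7 * sigma <= 8 * conv_mass A B U)%N.
  by apply: mass_of_cover_of_traces => // b /(allP satL); rewrite -/U /large -ltnNge.
have key : (sigma ^ 3 <= size L * (2 ^ 8 * (#|` A| ^ 2 * #|` B| * energy A B)))%N.
  set N := conv_mass A B U; set a := #|` A|; set b := #|` B|; set E := energy A B.
  have massN : (N ^ 2 <= size L * a * E)%N.
    by apply: leq_trans (conv_mass_sqr_leq A B U) _; rewrite leq_mul2r cardU orbT.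
  have cube : (49 * sigma ^ 3 <= 64 * (size L * (a ^ 2 * b * E)))%N.
    rewrite (_ : 49 * _ = (7 * sigma) ^ 2 * sigma)%N; last by ring.
    apply: (@leq_trans ((8 * N) ^ 2 * (a * b))).
      by apply: leq_mul; [rewrite leq_exp2r | exact: conv_mass_leq].
    rewrite (_ : (8 * N) ^ 2 * _ = 64 * (a * b) * N ^ 2)%N; last by ring.
    rewrite (_ : 64 * (size L * (a ^ 2 * b * E)) =
                 64 * (a * b) * (size L * a * E))%N; last by ring.
    by rewrite leq_mul2l massN orbT.
  rewrite mulnCA; apply: leq_trans (leq_pmull _ (isT : 0 < 49)%N) _.
  by apply: leq_trans cube _; apply: leq_mul.
pose d : {fset G} * G := (fset0, 0).
have [inB subF largeL disjL] := packing_nth d packL.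
exists (size L), (fun j => (nth d L j).1), (fun j => (nth d L j).2).
split; [|exact: inB|exact: subF| |exact: disjL].
- by rewrite -!natrX -2!natrM mulVr_div_nat; apply: ler_nat_div.
- by move=> j; rewrite -natrX mulVr_div_nat; apply: ler_nat_div; apply: largeL.
Qed.
End DisjointTranslates.

Local Open Scope ring_scope.

Theorem lemma9 (G : zmodType) (A B : {fset G}) :
  A != fset0 -> B != fset0 ->
  (exists (s : nat) (Aj : 'I_s -> {fset G}) (b : 'I_s -> G),
      [/\ (s%:R : rat) >= 2^-4 * (#|` A|%:R * #|` B|%:R ^+ 2) / (energy A B)%:R,
          (forall j, b j \in B),
          (forall j, Aj j `<=` translate A (b j)),
          (forall j, (#|` Aj j|%:R : rat) >= #|` A|%:R / 2) &
          (forall i j, i != j -> [disjoint Aj i & Aj j])])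
  /\
  (forall S : {fset G}, S `<=` sumset A B ->
     let sigma : rat := (\sum_(x <- S) rconv A B x)%N%:R in
     sigma >= 16 * #|` B|%:R ->
     exists (s : nat) (Sj : 'I_s -> {fset G}) (b : 'I_s -> G),
      [/\ (s%:R : rat) >= 2^-8 * sigma ^+ 3 / (#|` A|%:R ^+ 2 * #|` B|%:R * (energy A B)%:R),
          (forall j, b j \in B),
          (forall j, Sj j `<=` S `&` translate A (b j)),
          (forall j, (#|` Sj j|%:R : rat) >= 2^-3 * sigma / #|` B|%:R) &
          (forall i j, i != j -> [disjoint Sj i & Sj j])]).
Proof.
move=> A_neq0 B_neq0; split; first exact: many_disjoint_halves_of_translates.
move=> S _; rewrite -/(conv_mass A B S) => sigma sigma_ge.
apply: many_disjoint_large_traces.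
have B_gt0 : 0 < 16 * #|` B|%:R :> rat by rewrite mulr_gt0 // ltr0n cardfs_gt0.
rewrite -(ltr0n rat).
exact: lt_le_trans B_gt0 sigma_ge.
Qed.
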